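(* For $1\le i\le k$ let $G_i$ be an $r_i$-regular graph with $n_i\ge 2$ vertices and let $A_i$ be an Abelian group of order $n_i$; put $r=\sum_{i=1}^k r_i$. Suppose $\{1,\ldots,k\}$ is partitioned into three (possibly empty) sets $I,J,L$ such that: (a) for each $i\in I$, $G_i$ is $A_i$-distance magic and $\gcd(r-r_i,n_i)=1$; (b) for each $j\in J$, $G_j$ is $A_j$-distance antimagic and $\exp(A_j)$ divides $r-r_j$; (c) for each $l\in L$, $G_l$ admits an $A_l$-balanced labelling and $\gcd(r,n_l)=1$. Then $G_1\Box\cdots\Box G_k$ is $A_1\times\cdots\times A_k$-distance antimagic.
   Context: The Cartesian product $G_1\Box\cdots\Box G_k$ has vertex set $V(G_1)\times\cdots\times V(G_k)$, with $(x_1,\ldots,x_k)$ and $(y_1,\ldots,y_k)$ adjacent iff they differ in exactly one coordinate $i$ and $x_iy_i\in E(G_i)$. $\exp(A)$ is the least positive integer $m$ with $mx=0$ for all $x\in A$. For a graph $G$ with $n$ vertices and an Abelian group $A$ of order $n$ (written additively), and a bijection $f:V(G)\to A$, the weight of $x$ is $w_f(x)=\sum_{y\in N(x)} f(y)$ computed in $A$ ($N(x)$ the open neighbourhood). $f$ is an $A$-distance antimagic labelling if all weights are pairwise distinct, and an $A$-distance magic labelling if all weights are equal. $G$ is $A$-distance antimagic (resp. magic) if it admits such a labelling. If $G$ is $r$-regular, a bijection $f:V(G)\to A$ is an $A$-balanced labelling if $w_f(x)=r f(x)$ for every $x\in V(G)$. *)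

From HB Require Import structures.
From mathcomp Require Import all_boot all_order all_algebra all_fingroup all_solvable.
Set Implicit Arguments. Unset Strict Implicit. Unset Printing Implicit Defensive.
Import GRing.Theory.
Local Open Scope ring_scope.

Section DProd.
Variables (k : nat) (A : 'I_k -> finZmodType).
Definition dprodG := {dffun forall i, A i}.
HB.instance Definition _ := Finite.on dprodG.
Definition dprod0 : dprodG := [ffun i => 0].
Definition dprodD (x y : dprodG) : dprodG := [ffun i => x i + y i].
Definition dprodN (x : dprodG) : dprodG := [ffun i => - x i].
Lemma dprodA : associative dprodD.
Proof. by move=> x y z; apply/ffunP=> i; rewrite !ffunE addrA. Qed.
Lemma dprodC : commutative dprodD.
Proof. by move=> x y; apply/ffunP=> i; rewrite !ffunE addrC. Qed.
Lemma dprod0D : left_id dprod0 dprodD.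
Proof. by move=> x; apply/ffunP=> i; rewrite !ffunE add0r. Qed.
Lemma dprodND : left_inverse dprod0 dprodN dprodD.
Proof. by move=> x; apply/ffunP=> i; rewrite !ffunE addNr. Qed.
HB.instance Definition _ :=
  GRing.isZmodule.Build dprodG dprodA dprodC dprod0D dprodND.
End DProd.

Definition simple_graph (V : finType) (e : rel V) : Prop :=
  symmetric e /\ irreflexive e.

Definition regular (V : finType) (e : rel V) (r : nat) : Prop :=
  forall x : V, #|[set y | e x y]| = r.

Definition weight (V : finType) (e : rel V) (A : zmodType) (f : V -> A) (x : V) : A :=
  \sum_(y | e x y) f y.

Definition distance_antimagic_labelling (V : finType) (e : rel V) (A : zmodType)
  (f : V -> A) : Prop := bijective f /\ injective (weight e f).

Definition distance_magic_labelling (V : finType) (e : rel V) (A : zmodType)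
  (f : V -> A) : Prop := bijective f /\ forall x y, weight e f x = weight e f y.

Definition distance_antimagic (V : finType) (e : rel V) (A : zmodType) : Prop :=
  exists f : V -> A, distance_antimagic_labelling e f.

Definition distance_magic (V : finType) (e : rel V) (A : zmodType) : Prop :=
  exists f : V -> A, distance_magic_labelling e f.

Definition balanced_labelling (V : finType) (e : rel V) (r : nat) (A : zmodType)
  (f : V -> A) : Prop := bijective f /\ forall x, weight e f x = f x *+ r.

Definition zexp (A : finZmodType) : nat :=
  exponent [set: FinRing.Zmodule_to_finGroup A].

Definition cart_prod (k : nat) (V : 'I_k -> finType) (e : forall i, rel (V i))
  : rel {dffun forall i, V i} :=
  fun x y => [exists i, e i (x i) (y i) && [forall j, (j != i) ==> (x j == y j)]].

From HB Require Import structures.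
From mathcomp Require Import all_boot all_order all_algebra all_fingroup all_solvable.
From Stdlib Require Import ClassicalEpsilon.
Import GRing.Theory.

(* Label a vertex x = (x_1,...,x_k) of the product by
   g(x) = (f_1(x_1),...,f_k(x_k)), where f_i labels G_i.  A neighbour of x
   differs from x in exactly one coordinate j, so the i-th coordinate of the
   weight of x is
       w_{f_i}(x_i) + (r - r_i) f_i(x_i),
   the term j = i giving the weight in G_i and each of the r_j neighbours in
   a direction j <> i contributing f_i(x_i).  Hence g is distance antimagic as
   soon as every f_i is bijective and its "(r - r_i)-shifted weight"
   a |-> w_{f_i}(a) + (r - r_i) f_i(a) is injective.  Each of the hypotheses
   (a), (b), (c) provides such a labelling: for magic labellings the shift is
   injective because multiplication by an integer coprime to |A_i| is
   injective; for antimagic ones the shift vanishes since exp(A_j) divides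
   r - r_j; for balanced ones the shifted weight is r f_l(a). *)

Local Open Scope ring_scope.

Lemma dependent_choice {I : Type} {T : I -> Type} {P : forall i, T i -> Prop} :
  (forall i, exists t, P i t) -> exists f : forall i, T i, forall i, P i (f i).
Proof.
move=> ex; exists (fun i => proj1_sig (constructive_indefinite_description _ (ex i))).
by move=> i; exact: proj2_sig (constructive_indefinite_description _ (ex i)).
Qed.

(* Lagrange: |A| a = 0 for every a, as the order of a divides |A|. *)
Lemma mulrn_card {A : finZmodType} (a : A) : a *+ #|A| = 0.
Proof.
have := @expg_cardG (FinRing.Zmodule_to_finGroup A) [set: A] a (in_setT _).
by rewrite cardsT.
Qed.

Lemma mulrn_coprime_inj {A : finZmodType} {m : nat} :
  coprime m #|A| -> injective (fun a : A => a *+ m).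
Proof.
move=> cop a b /= eq_ab; apply/eqP; rewrite -subr_eq0; apply/eqP.
set c : FinRing.Zmodule_to_finGroup A := a - b.
have ord_m : (#[c]%g %| m)%N by rewrite order_dvdn FinRing.zmodXgE mulrnBl eq_ab subrr.
have ord_card : (#[c]%g %| #|A|)%N by rewrite order_dvdn FinRing.zmodXgE mulrn_card.
have : (#[c]%g %| 1)%N by rewrite -(eqP cop) dvdn_gcd ord_m ord_card.
by rewrite dvdn1 order_eq1 => /eqP.
Qed.

Lemma mulrn_zexp {A : finZmodType} (m : nat) (a : A) : (zexp A %| m)%N -> a *+ m = 0.
Proof.
case/dvdnP=> q ->.
have := @expg_exponent (FinRing.Zmodule_to_finGroup A) a [set: _] (in_setT _).
by rewrite FinRing.zmodXgE mulnC mulrnA /zexp => ->; rewrite mul0rn.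
Qed.

Definition shifted_weight {V : finType} (e : rel V) {A : zmodType}
    (f : V -> A) (m : nat) (x : V) : A :=
  weight e f x + f x *+ m.

Definition shifted_antimagic_labelling {V : finType} (e : rel V) {A : zmodType}
    (f : V -> A) (m : nat) : Prop :=
  bijective f /\ injective (shifted_weight e f m).

Section ShiftedAntimagicCriteria.
Variables (V : finType) (e : rel V) (A : finZmodType) (f : V -> A) (m : nat).

Lemma magic_shifted_antimagic :
  distance_magic_labelling e f -> coprime m #|A| -> shifted_antimagic_labelling e f m.
Proof.
move=> [bij_f magic] cop; split=> // x y; rewrite /shifted_weight (magic x y).
by move/addrI/(mulrn_coprime_inj cop)/(bij_inj bij_f).
Qed.

Lemma antimagic_shifted_antimagic :
  distance_antimagic_labelling e f -> (zexp A %| m)%N -> shifted_antimagic_labelling e f m.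
Proof.
move=> [bij_f inj_w] dvd_m; split=> // x y.
by rewrite /shifted_weight !mulrn_zexp // !addr0; exact: inj_w.
Qed.

(* Hypothesis (c): balanced labelling of an r-regular graph, r + m coprime
   to the group order; the shifted weight is then (r + m) f. *)
Lemma balanced_shifted_antimagic (r : nat) :
  balanced_labelling e r f -> coprime (r + m) #|A| -> shifted_antimagic_labelling e f m.
Proof.
move=> [bij_f bal] cop; split=> // x y; rewrite /shifted_weight !bal -!mulrnDr.
by move/(mulrn_coprime_inj cop)/(bij_inj bij_f).
Qed.

End ShiftedAntimagicCriteria.

Section CartesianProduct.
Variables (k : nat) (V : 'I_k -> finType) (e : forall i, rel (V i)).
Hypothesis e_irr : forall i, irreflexive (e i).

Notation vertex := {dffun forall i, V i}.

Definition set_coord (x : vertex) {j : 'I_k} (z : V j) : vertex :=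
  finfun (dfwith (fun l => x l) z).

Lemma set_coord_in (x : vertex) j (z : V j) : set_coord x z j = z.
Proof. by rewrite /set_coord ffunE dfwith_in. Qed.

Lemma set_coord_out (x : vertex) j (z : V j) l : l != j -> set_coord x z l = x l.
Proof. by move=> nlj; rewrite /set_coord ffunE dfwith_out // eq_sym. Qed.

Definition adj_in_dir (x : vertex) (j : 'I_k) (y : vertex) : bool :=
  e j (x j) (y j) && [forall l, (l != j) ==> (x l == y l)].

(* By irreflexivity, the direction of an edge is unique. *)
Lemma adj_in_dir_unique x j j' y : adj_in_dir x j y -> adj_in_dir x j' y -> j = j'.
Proof.
case/andP=> ej _ /andP[_ /forallP same]; apply/eqP; apply: contraLR ej => nj.
by move: (same j); rewrite nj /= => /eqP <-; rewrite e_irr.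
Qed.

Section Sums.
Variables (G : zmodType) (F : vertex -> G) (x : vertex).

Lemma sum_cart_nbhd_dir :
  \sum_(y | cart_prod e x y) F y = \sum_j \sum_(y | adj_in_dir x j y) F y.
Proof.
symmetry; rewrite (exchange_big_dep xpredT) //= [RHS]big_mkcond; apply: eq_bigr => y _.
rewrite /cart_prod; case: existsP => [[j0 adj0]|no_dir].
  rewrite (big_pred1 j0) // => j; apply/idP/eqP => [adj|->] //.
  exact: adj_in_dir_unique adj adj0.
by rewrite big_pred0 // => j; apply/negP => adj; apply: no_dir; exists j.
Qed.

Lemma sum_adj_in_dir j :
  \sum_(y | adj_in_dir x j y) F y = \sum_(z | e j (x j) z) F (set_coord x z).
Proof.
rewrite (reindex_onto (fun z : V j => set_coord x z) (fun y => y j)).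
  apply: eq_bigl => z; rewrite /adj_in_dir set_coord_in eqxx andbT andb_idr // => _.
  by apply/forallP => l; apply/implyP => nlj; rewrite set_coord_out.
move=> y /andP[_ /forallP same]; apply/ffunP => l; rewrite ffunE.
by case: dfwithP => // l' nl'; move: (same l'); rewrite eq_sym nl' => /eqP.
Qed.

End Sums.

Variables (A : 'I_k -> finZmodType) (r : 'I_k -> nat).
Hypothesis e_reg : forall i, regular (e i) (r i).

Definition prod_labelling (f : forall i, V i -> A i) (x : vertex) : dprodG A :=
  [ffun i => f i (x i)].

Lemma dprod_sumE (T : finType) (P : pred T) (F : T -> dprodG A) i :
  (\sum_(t | P t) F t) i = \sum_(t | P t) F t i.
Proof. by apply: (big_morph (fun a : dprodG A => a i)) => [a b|]; rewrite ffunE. Qed.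

Lemma weight_prod_labelling f x i :
  weight (cart_prod e) (prod_labelling f) x i =
  shifted_weight (e i) (f i) (\sum_t r t - r i) (x i).
Proof.
rewrite /weight dprod_sumE sum_cart_nbhd_dir.
rewrite (eq_bigr _ (fun j _ => sum_adj_in_dir _ _ x j)).
rewrite (bigD1 i) //= /shifted_weight; congr (_ + _).
  by apply: eq_bigr => z _; rewrite /prod_labelling ffunE set_coord_in.
rewrite [in RHS](bigD1 i) //= addKn -sumrMnr; apply: eq_bigr => j nji.
rewrite (eq_bigr (fun=> f i (x i))) => [|z _]; last first.
  by rewrite /prod_labelling ffunE set_coord_out // eq_sym.
by rewrite sumr_const -(e_reg j (x j)) cardsE.
Qed.

(* Product of bijective labellings is bijective: it is injective and both
   sides have cardinality prod_i |V_i| = prod_i |A_i|. *)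
Lemma prod_labelling_bij f : (forall i, bijective (f i)) -> bijective (prod_labelling f).
Proof.
move=> bij_f; apply: inj_card_bij.
  move=> x y /ffunP eq_xy; apply/ffunP => i.
  by apply: (bij_inj (bij_f i)); have := eq_xy i; rewrite !ffunE.
rewrite !card_dep_ffun; apply/eq_leq; congr foldr; apply: eq_map => i.
by rewrite (bij_eq_card (bij_f i)).
Qed.

Lemma prod_distance_antimagic f :
  (forall i, shifted_antimagic_labelling (e i) (f i) (\sum_t r t - r i)) ->
  distance_antimagic_labelling (cart_prod e) (prod_labelling f).
Proof.
move=> shifted; split; first by apply: prod_labelling_bij => i; case: (shifted i).
move=> x y eq_w; apply/ffunP => i; apply: (shifted i).2.
by rewrite -!weight_prod_labelling eq_w.
Qed.

End CartesianProduct.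

Arguments prod_labelling {k V A} f x.

Local Close Scope ring_scope.

Theorem mainTheorem7 (k : nat) (V : 'I_k -> finType) (e : forall i, rel (V i))
    (A : 'I_k -> finZmodType) (r n : 'I_k -> nat) (I J L : {set 'I_k}) :
    (forall i, simple_graph (e i)) ->
    (forall i, regular (e i) (r i)) ->
    (forall i, #|V i| = n i) ->
    (forall i, 2 <= n i) ->
    (forall i, #|A i| = n i) ->
    [disjoint I & J] -> [disjoint I & L] -> [disjoint J & L] ->
    I :|: J :|: L = [set: 'I_k] ->
    (forall i, i \in I ->
       distance_magic (e i) (A i) /\ coprime ((\sum_(t < k) r t) - r i) (n i)) ->
    (forall j, j \in J ->
       distance_antimagic (e j) (A j) /\ zexp (A j) %| (\sum_(t < k) r t) - r j) ->
    (forall l, l \in L ->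
       (exists f : V l -> A l, balanced_labelling (e l) (r l) f) /\
       coprime (\sum_(t < k) r t) (n l)) ->
    distance_antimagic (cart_prod e) (dprodG A).
Proof.
move=> simple reg _ _ cardA _ _ _ cover magicI antimagicJ balancedL.
have r_le_sum i : r i <= \sum_t r t by rewrite (bigD1 i) //= leq_addr.
have factor_labelling i : exists fi : V i -> A i,
    shifted_antimagic_labelling (e i) fi (\sum_t r t - r i).
  have : i \in I :|: J :|: L by rewrite cover inE.
  rewrite !inE => /orP[/orP[iI|iJ]|iL].
  - have [[fi magic] cop] := magicI i iI.
    by exists fi; apply: magic_shifted_antimagic magic _; rewrite cardA.
  - have [[fi antimagic] dvd] := antimagicJ i iJ.
    by exists fi; exact: antimagic_shifted_antimagic.
  - have [[fi balanced] cop] := balancedL i iL.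
    by exists fi; apply: balanced_shifted_antimagic balanced _; rewrite subnKC ?cardA.
have [f shifted] := dependent_choice factor_labelling.
exists (prod_labelling f).
by apply: prod_distance_antimagic => // i; case: (simple i).
Qed.
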